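(* For all $i,n\ge1$, $b_i(\mathcal{A}_n)<\frac{2^{in}}{i!}$. Consequently, for all $n>1$, the number $R_n$ of chambers of $\mathcal{A}_n$ satisfies $\log_2(R_n)<n^2-n+1$.
   Context: For $n\ge1$, the resonance arrangement $\mathcal{A}_n$ is the arrangement in $\mathbb{R}^n$ of the hyperplanes $H_I=\{x:\sum_{i\in I}x_i=0\}$ for all nonempty $I\subseteq[n]$. For an arrangement $\mathcal{A}$ in $\mathbb{R}^n$, its characteristic polynomial is $\chi(\mathcal{A};t)=\sum_{S\subseteq\mathcal{A}}(-1)^{|S|}t^{r(\mathcal{A})-r(S)}$ where $r(S)=\operatorname{codim}\bigcap_{H\in S}H$, and the $i$-th Betti number $b_i(\mathcal{A})$ is the absolute value of the coefficient of $t^{n-i}$ in $\chi(\mathcal{A};t)$. $R_n$ is the number of chambers (connected components of $\mathbb{R}^n\setminus\bigcup_{H\in\mathcal{A}_n}H$) of $\mathcal{A}_n$. *)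

From HB Require Import structures.
From mathcomp Require Import all_boot all_order all_algebra.
From mathcomp Require Import all_classical all_reals all_analysis.
Set Implicit Arguments. Unset Strict Implicit. Unset Printing Implicit Defensive.
Import Order.TTheory GRing.Theory Num.Theory.
Import numFieldNormedType.Exports.

Local Open Scope ring_scope.

(* Hyperplanes of the resonance arrangement A_n are indexed by nonempty
   I : {set 'I_n}; H_I = {x | \sum_(i in I) x_i = 0}. *)

Definition res_normal (n : nat) (I : {set 'I_n}) : 'rV[rat]_n :=
  \row_(j < n) (j \in I)%:R.

(* r(S) = codim of the intersection of the hyperplanes in S
   = dimension of the span of their normal vectors. *)
Definition res_rank (n : nat) (S : {set {set 'I_n}}) : nat :=
  \rank (\sum_(I in S) <<res_normal I>>)%MS.

Definition res_hyps (n : nat) : {set {set 'I_n}} := [set I | I != finset.set0].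

Definition res_charpoly (n : nat) : {poly int} :=
  \sum_(S : {set {set 'I_n}} | S \subset res_hyps n)
     ((-1) ^+ #|S|) *: 'X^(res_rank (res_hyps n) - res_rank S).

Definition res_betti (n i : nat) : nat :=
  if (i <= n)%N then absz ((res_charpoly n)`_(n - i)) else 0%N.

Local Open Scope classical_set_scope.

Definition res_complement (R : realType) (n : nat) : set 'rV[R]_n :=
  [set x | forall I : {set 'I_n}, I != finset.set0 -> (\sum_(j in I) x ord0 j)%R != 0%R].

Definition res_chambers (R : realType) (n : nat) : set (set 'rV[R]_n) :=
  [set connected_component (@res_complement R n) x | x in @res_complement R n].

From HB Require Import structures.
From mathcomp Require Import all_boot all_order all_algebra.
From mathcomp Require Import all_classical all_reals all_analysis.
Import Order.TTheory GRing.Theory Num.Theory.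
Import numFieldNormedType.Exports.
From mathcomp Require Import zify lra.
Set Implicit Arguments. Unset Strict Implicit. Unset Printing Implicit Defensive.
Local Open Scope ring_scope.

(* The coefficient of t^(n-i) in chi(A_n; t) is the signed
   count of the sets S of hyperplanes of rank i.  Order the hyperplanes; the
   sign-reversing involution "toggle the chosen hyperplane whose normal is
   spanned by the members of S after it" cancels every S except those in
   which no normal vector is spanned by the later ones.  These are
   independent i-sets, so b_i(A_n) <= C(2^n - 1, i) < 2^(in) / i!.

   Chambers correspond to the sign patterns realized by points
   of the complement: a linear form keeps its sign on a component
   (intermediate value theorem) and points with equal patterns are joined
   by a segment.  By Pajor's lemma there are at most as many patterns as
   sets of hyperplanes shattered by them, and a shattered set is
   independent, hence of size at most n.  Counting such sets gives
   R_n < 2^(n^2 - n + 1). *)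

Section BinomialEstimates.
Local Open Scope nat_scope.

Lemma ffact_leq_expn N M k : N <= M -> N ^_ k <= M ^ k.
Proof.
elim: k N => [|k IHk] [|N] leNM //.
by rewrite ffactSS expnS leq_mul // IHk // ltnW.
Qed.

(* k! * C(2^n - 1, k) < 2^(nk) for k > 0: the left side counts the
   k-tuples of distinct nonzero 0/1-vectors of length n. *)
Lemma bin_pred_pow2_fact n k : 0 < k -> 'C((2 ^ n).-1, k) * k`! < 2 ^ (n * k).
Proof.
move=> k_gt0; rewrite bin_ffact expnM; apply: leq_ltn_trans (ffact_leq_expn _ (leqnn _)) _.
by rewrite ltn_exp2r // ltn_predL expn_gt0.
Qed.

Lemma double_leq_pow2 n : 2 * n <= 2 ^ n.
Proof.
case: n => [|n] //; rewrite expnS leq_mul2l /=.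
exact: ltn_expl.
Qed.

Lemma pow2_lt_fact n : 3 < n -> 2 ^ n < n`!.
Proof.
elim: n => // n IHn; rewrite ltnS leq_eqVlt => /orP[/eqP <-|lt3n] //.
rewrite expnS factS; apply: leq_ltn_trans (_ : 2 * n`! < n.+1 * n`!).
  by rewrite leq_mul2l /= ltnW ?IHn.
by rewrite ltn_mul2r fact_gt0; lia.
Qed.

(* Inductively, multiplying the old
   bound by m+1 costs less than the factor 2^n / 2 since 2(m+1) <= 2^n,
   and the new term is at most 2^(n(m+1)) / (m+1)!. *)
Lemma partial_binomial_sum n m : m <= n ->
  (\sum_(k < m.+1) 'C((2 ^ n).-1, k)) * m`! <= 2 * 2 ^ (n * m).
Proof.
elim: m => [|m IHm] lemn; first by rewrite big_ord_recr big_ord0 /= bin0 muln0.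
rewrite big_ord_recr /= factS mulnDl.
have IH := IHm (ltnW lemn).
have last_term := ltnW (bin_pred_pow2_fact n (ltn0Sn m)).
have small_m : 2 * m.+1 <= 2 ^ n by apply: leq_trans (double_leq_pow2 n); rewrite leq_mul2l.
rewrite factS in last_term; rewrite mulnS expnD mulnC in last_term *.
move: IH last_term small_m.
set S := \sum_(_ < _) _; set C := 'C(_, _); set f := m`!.
set P := 2 ^ (n * m); set Q := 2 ^ n => IH last_term small_m.
have scaled_IH : S * f * m.+1 <= 2 * P * m.+1 by rewrite leq_mul2r IH orbT.
have scaled_small_m : 2 * m.+1 * P <= Q * P by rewrite leq_mul2r small_m orbT.
nia.
Qed.

(* The number of subsets of size at most n of a set of size 2^n - 1
   is less than 2^(n^2 - n + 1).  The cases n = 2, 3 are computed; for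
   n >= 4 the previous bound and n! > 2^n give the claim. *)
Lemma binomial_sum_lt n : 1 < n ->
  \sum_(k < n.+1) 'C((2 ^ n).-1, k) < 2 ^ (n ^ 2 - n + 1).
Proof.
case: n => [|[|[|[|n]]]] // _; try by [rewrite !big_ord_recr big_ord0].
set m := n.+4.
have sum_le := partial_binomial_sum (leqnn m).
have fact_gt := pow2_lt_fact (isT : 3 < m).
have split_pow : 2 * 2 ^ (m * m) = 2 ^ (m ^ 2 - m + 1) * 2 ^ m.
  by rewrite -expnS -expnD; congr (2 ^ _); rewrite -mulnn; nia.
rewrite split_pow in sum_le; move: sum_le fact_gt.
set S := \sum_(_ < _) _; set X := 2 ^ (m ^ 2 - m + 1).
have : 0 < X by rewrite expn_gt0.
nia.
Qed.

Lemma card_small_subsets (U : finType) (H : {set U}) m :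
  #|[set S : {set U} | (S \subset H) && (#|S| <= m)]| = \sum_(k < m.+1) 'C(#|H|, k).
Proof.
rewrite -sum1_card (partition_big (fun S : {set U} => inord #|S| : 'I_m.+1) xpredT) //=.
apply: eq_bigr => k _; rewrite -cards_draws -sum1_card; apply: eq_bigl => S.
rewrite !inE -andbA; case: (S \subset H) => //=.
apply/idP/eqP => [/andP[leSm /eqP <-]|eSk]; first by rewrite inordK.
by rewrite eSk -ltnS ltn_ord; apply/eqP/val_inj; rewrite /= inordK // eSk.
Qed.

End BinomialEstimates.

Section SignedRankCount.
Variables (F : fieldType) (T : finType) (m : nat).
Variables (v : T -> 'rV[F]_m) (H : {set T}).
Hypothesis v_neq0 : forall h, h \in H -> v h != 0.

Definition span_of (S : {set T}) : 'M[F]_m := (\sum_(I in S) <<v I>>)%MS.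

Lemma span_of_sub (S S' : {set T}) : S \subset S' -> (span_of S <= span_of S')%MS.
Proof.
move=> subSS'; apply/sumsmx_subP => I IS.
by apply: (sumsmx_sup I); [exact: (fintype.subsetP subSS')|].
Qed.

Lemma vec_in_span (S : {set T}) h : h \in S -> (v h <= span_of S)%MS.
Proof. by move=> hS; apply: (sumsmx_sup h); [exact: hS|rewrite genmxE]. Qed.

Lemma span_of_setU1 (S : {set T}) h :
  h \notin S -> (span_of (h |: S) :=: <<v h>> + span_of S)%MS.
Proof. by move=> hS; rewrite /span_of big_setU1. Qed.

Lemma rank_setU1_free (S : {set T}) h : v h != 0 -> ~~ (v h <= span_of S)%MS ->
  \rank (span_of (h |: S)) = (\rank (span_of S)).+1.
Proof.
move=> vh_neq0 vh_free; have hS : h \notin S by apply: contra vh_free; apply: vec_in_span.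
rewrite (span_of_setU1 hS).
have rank_line : \rank <<v h>>%MS = 1%N by rewrite mxrank_gen rank_rV vh_neq0.
have cap0 : \rank (<<v h>> :&: span_of S)%MS = 0%N.
  have [le_cap eq_cap] := mxrank_leqif_sup (capmxSl <<v h>>%MS (span_of S)).
  apply/eqP; apply: contraNT vh_free; rewrite -lt0n => cap_pos.
  have : (<<v h>> <= <<v h>> :&: span_of S)%MS.
    by rewrite -eq_cap eqn_leq le_cap rank_line.
  by rewrite sub_capmx => /andP[_]; rewrite genmxE.
by have := mxrank_sum_cap <<v h>>%MS (span_of S); rewrite rank_line cap0 addn0.
Qed.

(* T is ordered by [enum_rank]; [later S h] is the part of S strictly
   after h. *)
Definition later (S : {set T}) (h : T) : {set T} :=
  [set g in S | (enum_rank h < enum_rank g)%N].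

Lemma later_sub (S : {set T}) h : later S h \subset S :\ h.
Proof.
apply/fintype.subsetP => g; rewrite !inE => /andP[gS lt_hg]; rewrite gS andbT.
by apply: contraTneq lt_hg => ->; rewrite ltnn.
Qed.

(* For S with no redundant element, S is independent
   (lemma [rank_no_redundant]); the others cancel in signed counts. *)
Definition redundant (S : {set T}) : {set T} :=
  [set h in H | (v h <= span_of (later S h))%MS].

Lemma redundant_span (S : {set T}) h : h \in redundant S -> (v h <= span_of (S :\ h))%MS.
Proof.
by rewrite inE => /andP[_ vh_sub]; apply: submx_trans vh_sub (span_of_sub (later_sub _ _)).
Qed.

Definition toggle (S : {set T}) (h : T) : {set T} :=
  if h \in S then S :\ h else h |: S.

Lemma toggleK (S : {set T}) h : toggle (toggle S h) h = S.
Proof.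
rewrite /toggle; case: (boolP (h \in S)) => hS.
  by rewrite !inE eqxx /= finset.setD1K.
by rewrite !inE eqxx /= setU1K.
Qed.

Lemma toggle_sub (S : {set T}) h : h \in H -> S \subset H -> toggle S h \subset H.
Proof.
move=> hH SH; rewrite /toggle; case: ifP => _.
  exact: fintype.subset_trans (subsetDl _ _) SH.
by rewrite finset.subUset finset.sub1set hH.
Qed.

Lemma sign_toggle (S : {set T}) h : (-1) ^+ #|toggle S h| = - (-1) ^+ #|S| :> int.
Proof.
rewrite /toggle; case: (boolP (h \in S)) => hS.
  by rewrite [in RHS](cardsD1 h S) hS add1n exprS mulN1r opprK.
by rewrite cardsU1 hS add1n exprS mulN1r.
Qed.

Lemma span_toggle (S : {set T}) h :
  (v h <= span_of (S :\ h))%MS -> (span_of (toggle S h) == span_of S)%MS.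
Proof.
have absorb (Y : {set T}) :
    h \notin Y -> (v h <= span_of Y)%MS -> (span_of (h |: Y) == span_of Y)%MS.
  move=> hY vh_sub; apply/eqmxP; apply: eqmx_trans (span_of_setU1 hY) _.
  by apply/addsmx_idPr; rewrite genmxE.
rewrite /toggle; case: ifP => hS vh_sub.
  have hSh : h \notin S :\ h by rewrite !inE eqxx.
  have /eqmxP := absorb _ hSh vh_sub; rewrite finset.setD1K // => eq_span.
  by apply/eqmxP; apply: eqmx_sym.
have S_eq : S :\ h = S by apply/setP => x; rewrite !inE; case: eqP => // ->; rewrite hS.
by apply: absorb; [rewrite hS | rewrite -S_eq].
Qed.

Lemma later_toggle_ge (S : {set T}) h g : (enum_rank h <= enum_rank g)%N ->
  later (toggle S h) g = later S g.
Proof.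
move=> le_hg; apply/setP => x; rewrite !inE /toggle.
case: (boolP (x == h)) => [/eqP ->|xh]; first by rewrite ltnNge le_hg !andbF.
by case: ifP => _; rewrite !inE ?(negbTE xh).
Qed.

Lemma later_toggle_lt (S : {set T}) h g : (enum_rank g < enum_rank h)%N ->
  later (toggle S h) g = toggle (later S g) h.
Proof.
move=> lt_gh; apply/setP => x; rewrite /toggle !inE lt_gh andbT.
by case: (boolP (h \in S)) => hS; rewrite !inE;
  case: (boolP (x == h)) => [/eqP ->|xh] //=; rewrite lt_gh.
Qed.

(* Toggling a redundant element does not change the set of redundant ones:
   this is what makes the sign-reversing map below an involution. *)
Lemma redundant_toggle (S : {set T}) h :
  h \in redundant S -> redundant (toggle S h) = redundant S.
Proof.
move=> h_red; apply/setP => g; rewrite !inE.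
case: (leqP (enum_rank h) (enum_rank g)) => [le_hg|lt_gh]; first by rewrite later_toggle_ge.
have vh_sub : (v h <= span_of (later S g :\ h))%MS.
  move: h_red; rewrite inE => /andP[_ /submx_trans]; apply; apply: span_of_sub.
  apply/fintype.subsetP => x; rewrite !inE => /andP[xS lt_hx].
  rewrite xS (ltn_trans lt_gh lt_hx) !andbT.
  by apply: contraTneq lt_hx => ->; rewrite ltnn.
by rewrite later_toggle_lt //; have /eqmxP -> := span_toggle vh_sub.
Qed.

Definition flip (S : {set T}) : {set T} :=
  if [pick h in redundant S] is Some h then toggle S h else S.

Lemma flipK : involutive flip.
Proof.
move=> S; rewrite {2}/flip; case E: [pick h in redundant S] => [h|]; last by rewrite /flip E.
have h_red : h \in redundant S by move: E; case: pickP => // x x_red [<-].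
by rewrite /flip redundant_toggle // E toggleK.
Qed.

Lemma flip_toggle (S : {set T}) :
  redundant S != finset.set0 -> exists2 h, h \in redundant S & flip S = toggle S h.
Proof.
case/set0Pn => x x_red; rewrite /flip; case: pickP => [h h_red|/(_ x)]; last by rewrite x_red.
by exists h.
Qed.

Definition cancelling (i : nat) (S : {set T}) : bool :=
  [&& S \subset H, \rank (span_of S) == i & redundant S != finset.set0].

Lemma cancelling_flip i S : cancelling i S -> cancelling i (flip S).
Proof.
case/and3P => SH rankS S_red; have [h h_red ->] := flip_toggle S_red.
have hH : h \in H by move: h_red; rewrite inE => /andP[].
rewrite /cancelling toggle_sub // redundant_toggle // S_red andbT.
by have /eqmx_rank -> := span_toggle (redundant_span h_red).
Qed.

Lemma cancelling_sum i : \sum_(S | cancelling i S) (-1) ^+ #|S| = 0 :> int.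
Proof.
set X := \sum_(S | _) _; suff: X = - X.
  by move/eqP; rewrite -addr_eq0 -mulr2n mulrn_eq0 /= => /eqP.
rewrite {1}/X (reindex_inj (can_inj flipK)) /= -sumrN; apply: eq_big => S.
  by apply/idP/idP => [/cancelling_flip|]; rewrite ?flipK //; apply: cancelling_flip.
move=> /cancelling_flip; rewrite flipK => /and3P[_ _ S_red].
by have [h _ ->] := flip_toggle S_red; exact: sign_toggle.
Qed.

(* A subset of H in which no vector is spanned by the later ones is
   independent: peel off its first element, which is outside the span of
   the others, and induct. *)
Lemma rank_free_sequence (S : {set T}) : S \subset H ->
  (forall h, h \in S -> ~~ (v h <= span_of (later S h))%MS) ->
  \rank (span_of S) = #|S|.
Proof.
move: {2}#|S| (erefl #|S|) => k; elim: k S => [|k IHk] S cardS SH S_free.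
  have -> : S = finset.set0 by apply/eqP; rewrite -cards_eq0 cardS.
  by rewrite /span_of big_set0 mxrank0 cards0.
have [h0 h0S] : exists h0, h0 \in S by apply/set0Pn; rewrite -card_gt0 cardS.
case: (@arg_minnP _ h0 (mem S) (fun x => nat_of_ord (enum_rank x)) h0S) => h hS h_min.
have {}hS : h \in S by [].
have later_h : later S h = S :\ h.
  apply/setP => x; rewrite !inE; case: (boolP (x == h)) => [/eqP ->|xh] /=.
    by rewrite ltnn andbF.
  case: (boolP (x \in S)) => xS //=; rewrite ltn_neqAle h_min // andbT.
  by apply: contra xh => /eqP /val_inj /enum_rank_inj ->.
have later_Sh g : g \in S -> later (S :\ h) g = later S g.
  move=> gS; apply/setP => y; rewrite !inE.
  by case: (boolP (y == h)) => [/eqP ->|//] /=; rewrite hS ltnNge h_min.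
have vh_free : ~~ (v h <= span_of (S :\ h))%MS by rewrite -later_h; apply: S_free.
rewrite -(finset.setD1K hS) rank_setU1_free ?v_neq0 ?(fintype.subsetP SH) //.
rewrite cardsU1 setD11 add1n; congr _.+1; apply: IHk.
- by move: cardS; rewrite (cardsD1 h S) hS add1n => -[].
- exact: fintype.subset_trans (subsetDl _ _) SH.
by move=> g; rewrite inE => /andP[_ gS]; rewrite later_Sh //; apply: S_free.
Qed.

Lemma rank_no_redundant (S : {set T}) : S \subset H -> redundant S = finset.set0 ->
  \rank (span_of S) = #|S|.
Proof.
move=> SH S_red; apply: rank_free_sequence => // h hS; apply/negP => vh_sub.
have : h \in redundant S by rewrite inE (fintype.subsetP SH) // vh_sub.
by rewrite S_red inE.
Qed.

Definition signed_rank_count (i : nat) : int :=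
  \sum_(S : {set T} | (S \subset H) && (\rank (span_of S) == i)) (-1) ^+ #|S|.

(* Only the sets without redundant elements survive, and they are
   independent i-subsets of H. *)
Lemma signed_rank_count_le i : (absz (signed_rank_count i) <= 'C(#|H|, i))%N.
Proof.
rewrite /signed_rank_count (bigID (fun S => redundant S == finset.set0)) /=.
rewrite [X in _ + X](eq_bigl (cancelling i)) ?cancelling_sum ?addr0; last first.
  by move=> S; rewrite /cancelling andbA.
rewrite -cards_draws -lez_nat abszE; apply: le_trans (ler_norm_sum _ _ _) _.
under eq_bigr do rewrite normrX normrN1 expr1n.
rewrite sumr_const -natz ler_nat; apply: subset_leq_card; apply/fintype.subsetP => S.
rewrite unfold_in => /andP[/andP[SH /eqP rankS] /eqP S_red].
by rewrite inE SH -rankS rank_no_redundant // eqxx.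
Qed.

End SignedRankCount.

Section ResonanceBetti.
Variable n : nat.

Lemma res_normal_neq0 (I : {set 'I_n}) : I \in res_hyps n -> res_normal I != 0.
Proof.
rewrite inE => /set0Pn [j jI]; apply/eqP => /matrixP /(_ ord0 j).
by rewrite !mxE jI => /eqP; rewrite oner_eq0.
Qed.

Lemma card_res_hyps : #|res_hyps n| = (2 ^ n).-1.
Proof.
have := cardsC [set finset.set0 : {set 'I_n}]; rewrite cards1.
have -> : ~: [set finset.set0] = res_hyps n by apply/setP => I; rewrite !inE.
by rewrite -cardsT -powersetT card_powerset cardsT card_ord => <-.
Qed.

(* The singletons already span: A_n is essential. *)
Lemma res_rank_hyps : res_rank (res_hyps n) = n.
Proof.
apply/eqP; rewrite eqn_leq rank_leq_col /= -[X in (X <= _)%N](mxrank1 rat n).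
apply: mxrankS; apply/row_subP => j; rewrite row1.
have -> : delta_mx 0 j = res_normal [set j].
  by apply/matrixP => a b; rewrite !mxE !inE [a]ord1 eqxx /= eq_sym.
by apply: vec_in_span; rewrite inE; apply/set0Pn; exists j; exact: set11.
Qed.

Lemma res_charpoly_coef i : (i <= n)%N ->
  (res_charpoly n)`_(n - i) = signed_rank_count (@res_normal n) (res_hyps n) i.
Proof.
move=> le_in; rewrite /res_charpoly coef_sumMXn res_rank_hyps.
apply: eq_bigl => S; congr (_ && _).
have := rank_leq_col (span_of (@res_normal n) S); rewrite -/(res_rank S).
by move=> le_rank; apply/eqP/eqP; lia.
Qed.

Lemma res_betti_le_binomial i : (res_betti n i <= 'C((2 ^ n).-1, i))%N.
Proof.
rewrite /res_betti; case: (leqP i n) => //= le_in.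
rewrite res_charpoly_coef // -card_res_hyps.
exact: signed_rank_count_le res_normal_neq0 i.
Qed.

Lemma res_betti_lt i : (1 <= i)%N ->
  (res_betti n i)%:R < (2 ^ (i * n))%:R / (i`!)%:R :> rat.
Proof.
move=> i_gt0; rewrite ltr_pdivlMr ?ltr0n ?fact_gt0 // -natrM ltr_nat.
case: (leqP i n) => [le_in|lt_ni]; last first.
  by rewrite /res_betti (leqNgt i n) lt_ni mul0n expn_gt0.
apply: leq_ltn_trans (leq_mul (res_betti_le_binomial i) (leqnn _)) _.
by rewrite [(i * n)%N]mulnC bin_pred_pow2_fact.
Qed.

End ResonanceBetti.

Section Shattering.
Local Open Scope nat_scope.
Variable U : finType.

Definition shattered (F : {set {set U}}) (A : {set U}) : bool :=
  [forall B : {set U}, (B \subset A) ==> [exists X in F, X :&: A == B]].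

Definition shattered_sets (F : {set {set U}}) : {set {set U}} :=
  [set A | shattered F A].

Lemma shatteredP (F : {set {set U}}) (A : {set U}) :
  reflect (forall B : {set U}, B \subset A -> exists2 X, X \in F & X :&: A = B)
          (A \in shattered_sets F).
Proof.
rewrite inE; apply: (iffP forallP) => [sh B BA|sh B]; last first.
  by apply/implyP => /sh [X XF <-]; apply/existsP; exists X; rewrite XF eqxx.
by have /existsP [X /andP[XF /eqP <-]] := implyP (sh B) BA; exists X.
Qed.

Lemma shattered_sets_sub (F G : {set {set U}}) :
  F \subset G -> shattered_sets F \subset shattered_sets G.
Proof.
move=> FG; apply/fintype.subsetP => A /shatteredP sh; apply/shatteredP => B /sh [X XF eX].
by exists X; rewrite ?(fintype.subsetP FG).
Qed.

Lemma shattered_set0 (F : {set {set U}}) :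
  F != finset.set0 -> finset.set0 \in shattered_sets F.
Proof.
case/set0Pn => X XF; apply/shatteredP => B; rewrite finset.subset0 => /eqP ->.
by exists X; rewrite ?finset.setI0.
Qed.

Definition with_elt (F : {set {set U}}) (x : U) := [set X in F | x \in X].
Definition without_elt (F : {set {set U}}) (x : U) := [set X in F | x \notin X].

Lemma notin_shattered (F : {set {set U}}) x b (A : {set U}) :
  (forall X, X \in F -> (x \in X) = b) -> A \in shattered_sets F -> x \notin A.
Proof.
move=> Fx /shatteredP sh; apply/negP => xA; case: b Fx => Fx.
  have [X XF eX] := sh (A :\ x) (subD1set A x).
  by have := congr1 (fun Y : {set U} => x \in Y) eX; rewrite !inE Fx // xA eqxx.
have [X XF eX] := sh A (fintype.subxx A).
by have := congr1 (fun Y : {set U} => x \in Y) eX; rewrite !inE Fx // xA.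
Qed.

Lemma shattered_setU1 (F : {set {set U}}) x (A : {set U}) :
  A \in shattered_sets (without_elt F x) -> A \in shattered_sets (with_elt F x) ->
  x |: A \in shattered_sets F.
Proof.
move=> /shatteredP sh0 /shatteredP sh1; apply/shatteredP => B BxA.
have BxA' : B :\ x \subset A.
  apply/fintype.subsetP => y; rewrite !inE => /andP[/negbTE yx].
  by move/(fintype.subsetP BxA); rewrite !inE yx.
have extend (X : {set U}) : (x \in X) = (x \in B) -> X :&: A = B :\ x -> X :&: (x |: A) = B.
  move=> xX eX; apply/setP => y; rewrite !inE.
  case: (boolP (y == x)) => [/eqP ->|yx] /=; first by rewrite andbT xX.
  by have := congr1 (fun Y : {set U} => y \in Y) eX; rewrite !inE yx.
case: (boolP (x \in B)) => xB.
  have [X] := sh1 _ BxA'; rewrite inE => /andP[XF xX] eX.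
  by exists X; rewrite // extend // xX xB.
have [X] := sh0 _ BxA'; rewrite inE => /andP[XF xX] eX.
by exists X; rewrite // extend // (negbTE xX) (negbTE xB).
Qed.

Lemma card_split_elt (F : {set {set U}}) x :
  #|with_elt F x| + #|without_elt F x| = #|F|.
Proof.
rewrite -(cardsID [set X : {set U} | x \in X] F).
by congr (_ + _); apply: eq_card => X; rewrite !inE andbC.
Qed.

(* Pajor's inductive step: the shattered sets of the two halves of F inject
   into those of F, the common ones being counted twice via x |: _. *)
Lemma shattered_split (F : {set {set U}}) x :
  #|shattered_sets (without_elt F x)| + #|shattered_sets (with_elt F x)|
    <= #|shattered_sets F|.
Proof.
set S0 := shattered_sets _; set S1 := shattered_sets _.
have xS0 A : A \in S0 -> x \notin A.
  by apply: (notin_shattered (b := false)) => X /[!inE] /andP[_ /negbTE].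
have xS1 A : A \in S1 -> x \notin A by apply: (notin_shattered (b := true)) => X /[!inE] /andP[].
pose S01 := [set x |: A | A in S0 :&: S1].
have sub_F : (S0 :|: S1) :|: S01 \subset shattered_sets F.
  rewrite !finset.subUset !shattered_sets_sub ?andbT; last 2 first.
  - by apply/fintype.subsetP => X /[!inE] /andP[].
  - by apply/fintype.subsetP => X /[!inE] /andP[].
  apply/fintype.subsetP => _ /imsetP [A /setIP [A0 A1] ->].
  exact: shattered_setU1.
have disjoint01 : (S0 :|: S1) :&: S01 = finset.set0.
  apply/setP => B; rewrite finset.in_set0 finset.in_setI finset.in_setU.
  apply/negP => /andP[BS /imsetP [A _ eB]].
  by case/orP: BS => [/xS0|/xS1]; rewrite eB setU11.
have card01 : #|S01| = #|S0 :&: S1|.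
  apply: card_in_imset => A A' /setIP [A0 _] /setIP [A'0 _] eA.
  by rewrite -(setU1K (xS0 _ A0)) eA setU1K // xS0.
have := cardsUI (S0 :|: S1) S01; rewrite disjoint01 cards0 addn0 card01.
have := cardsUI S0 S1; have := subset_leq_card sub_F; lia.
Qed.

Lemma separating_elt (F : {set {set U}}) : 1 < #|F| ->
  exists x, 0 < #|with_elt F x| /\ 0 < #|without_elt F x|.
Proof.
move=> F_gt1; have [X XF] : exists X, X \in F by apply/set0Pn; rewrite -card_gt0 ltnW.
have [Y YF YX] : exists2 Y, Y \in F & Y != X.
  have /set0Pn [Y] : F :\ X != finset.set0.
    by rewrite -card_gt0; move: F_gt1; rewrite (cardsD1 X F) XF add1n ltnS.
  by rewrite !inE => /andP[]; exists Y.
have [x xXY] : exists x, (x \in X) != (x \in Y).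
  apply/existsP; apply: contraNT YX => /existsPn sameXY; apply/eqP/setP => y.
  by have := sameXY y; rewrite negbK => /eqP.
have xY : (x \in Y) = ~~ (x \in X) by move: xXY; case: (x \in X); case: (x \in Y).
exists x; rewrite !card_gt0; split; apply/set0Pn; case: (boolP (x \in X)) => xX.
- by exists X; rewrite inE XF xX.
- by exists Y; rewrite inE YF xY xX.
- by exists Y; rewrite inE YF xY xX.
- by exists X; rewrite inE XF xX.
Qed.

Lemma card_le_shattered (F : {set {set U}}) : #|F| <= #|shattered_sets F|.
Proof.
move: {2}#|F|.+1 (ltnSn #|F|) => k; elim: k F => // k IHk F ltFk.
case: (leqP #|F| 1) => [le1|/separating_elt [x [F1_gt0 F0_gt0]]].
  case: (posnP #|F|) => [-> //|F_gt0]; apply: leq_trans le1 _.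
  by rewrite card_gt0; apply/set0Pn; exists finset.set0; rewrite shattered_set0 // -card_gt0.
have split_F := card_split_elt F x.
apply: leq_trans (shattered_split F x); rewrite -split_F addnC leq_add // IHk //; lia.
Qed.

End Shattering.

Section Chambers.
Local Open Scope classical_set_scope.
Variables (R : realType) (n : nat).
Local Notation V := 'rV[R]_n.
Local Notation A := (@res_complement R n).

Definition lin (I : {set 'I_n}) (x : V) : R := \sum_(j in I) x ord0 j.

Lemma lin_continuous I : continuous (lin I).
Proof.
rewrite /lin; elim: (index_enum _) => [|j s IHs].
  by under eq_fun do rewrite big_nil; exact: cst_continuous.
under eq_fun do rewrite big_cons.
case: (j \in I) => // x; apply: continuousD; [exact: coord_continuous | exact: IHs].
Qed.

Lemma lin_segment I (x y : V) t :
  lin I (x + t *: (y - x)) = lin I x + t * (lin I y - lin I x).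
Proof.
rewrite /lin (eq_bigr (fun j => x ord0 j + t * (y ord0 j - x ord0 j))); last first.
  by move=> j _; rewrite !mxE.
by rewrite big_split /= -mulr_sumr sumrB.
Qed.

Lemma segment_continuous (x y : V) : continuous (fun t : R => x + t *: (y - x)).
Proof.
move=> t; apply: (@continuousD _ _ _ (fun=> x) (fun t : R => t *: (y - x))).
  exact: cst_continuous.
exact: continuousZr_tmp.
Qed.

Definition sign_pattern (x : V) : {set {set 'I_n}} :=
  [set I in res_hyps n | 0 < lin I x].

(* A linear form H_I cannot change sign on a connected component of the
   complement, by the intermediate value theorem. *)
Lemma component_no_sign_change x a b I :
  connected_component A x a -> connected_component A x b ->
  I != finset.set0 -> 0 < lin I a -> lin I b < 0 -> False.
Proof.
move=> Ca Cb I_neq0 pos_a neg_b.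
have conn_image : connected (lin I @` connected_component A x).
  apply: connected_continuous_connected; first exact: component_connected.
  exact/continuous_subspaceT/lin_continuous.
have /connected_intervalP interval_image := conn_image.
have [z Cz z0] : (lin I @` connected_component A x) 0.
  apply: (interval_image (lin I b) (lin I a)); [by exists b|by exists a|].
  by rewrite (ltW neg_b) (ltW pos_a).
by have := connected_component_sub Cz I I_neq0; rewrite -/(lin I z) z0 eqxx.
Qed.

Lemma sign_pattern_component x y :
  connected_component A x y -> sign_pattern y = sign_pattern x.
Proof.
move=> Cy; have Ay := connected_component_sub Cy.
have Ax : A x := connected_component_sub (connected_component_sym Cy).
have Cx : connected_component A x x by exact: connected_component_refl.
apply/setP => I; rewrite !inE; case: (boolP (I == finset.set0)) => //= I_neq0.
have := Ay I I_neq0; have := Ax I I_neq0; rewrite -!/(lin I _).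
case: (ltrgtP 0 (lin I y)) => hy; case: (ltrgtP 0 (lin I x)) => hx //; rewrite ?eqxx //.
- by case: (component_no_sign_change Cy Cx I_neq0 hy hx).
- by case: (component_no_sign_change Cx Cy I_neq0 hx hy).
Qed.

(* Points of the complement with the same sign pattern are joined by the
   segment between them, which avoids every hyperplane. *)
Lemma same_pattern_component x y : A x -> A y -> sign_pattern x = sign_pattern y ->
  connected_component A x y.
Proof.
move=> Ax Ay same_xy; pose g := fun t : R => x + t *: (y - x).
pose seg := g @` [set t : R | 0 <= t <= 1].
have seg_y : seg y by exists 1; [rewrite /= ler01 lexx | rewrite /g scale1r addrC subrK].
apply: (@connected_component_max _ _ seg) seg_y.
- by exists 0; [rewrite /= lexx ler01 | rewrite /g scale0r addr0].
- move=> _ [t /andP[t0 t1] <-] I I_neq0; rewrite -/(lin I _) /g lin_segment.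
  have := Ax I I_neq0; have := Ay I I_neq0; rewrite -!/(lin I _) => ny nx.
  have same_sign : (0 < lin I x) = (0 < lin I y).
    by move/setP: same_xy => /(_ I); rewrite !inE I_neq0.
  case: (ltrgtP 0 (lin I x)) same_sign => hx same_sign; last by rewrite -hx eqxx in nx.
  + have hy : 0 < lin I y by rewrite -same_sign.
    by apply/negP => /eqP h0; clear -t0 t1 hx hy h0; nra.
  + have hy : lin I y < 0 by rewrite lt_neqAle ny /= leNgt -same_sign.
    by apply/negP => /eqP h0; clear -t0 t1 hx hy h0; nra.
- apply: connected_continuous_connected; last exact/continuous_subspaceT/segment_continuous.
  apply/connected_intervalP => a b /andP[a0 a1] /andP[b0 b1] z /andP[az zb].
  by apply/andP; split; [exact: le_trans az | exact: le_trans zb _].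
Qed.

Lemma lin_res_normal I (x : V) : lin I x = \sum_j ratr ((res_normal I) ord0 j) * x ord0 j.
Proof.
rewrite /lin [RHS](bigID (fun j => j \in I)) /= [X in _ = _ + X]big1 ?addr0.
  by apply: eq_bigr => j jI; rewrite mxE jI rmorph1 mul1r.
by move=> j /negbTE jI; rewrite mxE jI rmorph0 mul0r.
Qed.

Lemma lin_dependency (h : {set 'I_n}) (G : {set {set 'I_n}}) :
  (res_normal h <= span_of (@res_normal n) G)%MS ->
  exists c : {set 'I_n} -> rat, forall x : V, lin h x = \sum_(I in G) ratr (c I) * lin I x.
Proof.
case/sub_sumsmxP => u h_sum.
have : forall I, exists a : rat, u I *m <<res_normal I>>%MS = a *: res_normal I.
  move=> I; apply/sub_rVP.
  by apply: submx_trans (submxMl _ _) _; rewrite genmxE.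
case/fin_all_exists => c hc.
exists c => x; rewrite lin_res_normal h_sum.
under eq_bigr do rewrite summxE rmorph_sum mulr_suml.
rewrite exchange_big /=; apply: eq_bigr => I _.
rewrite lin_res_normal mulr_sumr hc; apply: eq_bigr => j _.
by rewrite !mxE rmorphM mulrA.
Qed.

Definition sign_patterns : {set {set {set 'I_n}}} :=
  [set P | `[< exists x, A x /\ sign_pattern x = P >]].

Lemma sign_patternsP P : reflect (exists x, A x /\ sign_pattern x = P) (P \in sign_patterns).
Proof. by rewrite inE; exact: asboolP. Qed.

Lemma shattered_patterns_sub P : P \in shattered_sets sign_patterns -> P \subset res_hyps n.
Proof.
case/shatteredP/(_ P (fintype.subxx P)) => X /sign_patternsP [x [_ <-]] eP.
by apply/fintype.subsetP => I; rewrite -eP !inE => /andP[/andP[]].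
Qed.

(* A shattered set of hyperplanes has no normal vector spanned by the later
   ones: choose the side of each later hyperplane according to the sign of
   its coefficient in the dependency, and the dependency forces the sign
   of the remaining form. *)
Lemma shattered_patterns_free P h : P \in shattered_sets sign_patterns -> h \in P ->
  ~~ (res_normal h <= span_of (@res_normal n) (later P h))%MS.
Proof.
move=> P_sh hP; apply/negP => /lin_dependency [c lin_h].
pose B := [set I in later P h | 0 < c I].
have BP : B \subset P by apply/fintype.subsetP => I /[!inE] /andP[/andP[]].
move/shatteredP: (P_sh) => /(_ B BP) [X /sign_patternsP [x [Ax <-]] eB].
have PH := shattered_patterns_sub P_sh.
have posB I : I \in P -> (0 < lin I x) = (I \in B).
  by move=> IP; rewrite -eB !inE IP andbT; move: (fintype.subsetP PH I IP); rewrite inE => ->.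
have neg_h : lin h x < 0.
  have : lin h x != 0 by apply: Ax; move: (fintype.subsetP PH h hP); rewrite inE.
  by rewrite lt_neqAle => ->; rewrite /= leNgt posB // !inE ltnn andbF.
suff : 0 <= lin h x by rewrite leNgt neg_h.
rewrite lin_h; apply: sumr_ge0 => I I_later.
have IP : I \in P by move: I_later; rewrite inE => /andP[].
have := posB I IP; rewrite [I \in B]inE I_later /= => sign_I.
case: (ltP 0 (c I)) => cI.
  by apply: mulr_ge0; rewrite ?ltW ?ltr0q // sign_I.
by apply: mulr_le0; [rewrite lerq0 | rewrite leNgt sign_I -leNgt].
Qed.

Lemma shattered_patterns_card P : P \in shattered_sets sign_patterns -> (#|P| <= n)%N.
Proof.
move=> P_sh; have PH := shattered_patterns_sub P_sh.
rewrite -(rank_free_sequence (@res_normal_neq0 n) PH); first exact: rank_leq_col.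
by move=> h; apply: shattered_patterns_free.
Qed.

(* Pajor's lemma bounds the number of sign patterns by the number of
   subsets of at most n hyperplanes. *)
Lemma card_sign_patterns_lt : (1 < n)%N -> (#|sign_patterns| < 2 ^ (n ^ 2 - n + 1))%N.
Proof.
move=> n_gt1; apply: leq_ltn_trans (card_le_shattered sign_patterns) _.
apply: leq_ltn_trans (binomial_sum_lt n_gt1).
rewrite -card_res_hyps -card_small_subsets; apply: subset_leq_card.
apply/fintype.subsetP => P P_sh.
by rewrite inE shattered_patterns_sub ?shattered_patterns_card.
Qed.

Lemma card_sign_patterns_gt0 : (0 < #|sign_patterns|)%N.
Proof.
rewrite card_gt0; apply/set0Pn; exists (sign_pattern (const_mx 1)); apply/sign_patternsP.
exists (const_mx 1); split=> // I /set0Pn [j jI].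
under eq_bigr do rewrite mxE.
by rewrite sumr_const pnatr_eq0 -lt0n card_gt0; apply/set0Pn; exists j.
Qed.

Definition chamber_pattern (C : set V) := sign_pattern (xget 0 C).

Lemma chamber_patternE x : A x -> chamber_pattern (connected_component A x) = sign_pattern x.
Proof.
move=> Ax; apply: sign_pattern_component; apply: xgetPex.
by exists x; exact: connected_component_refl.
Qed.

Definition chamber_index (C : set V) : nat := index (chamber_pattern C) (enum sign_patterns).

Lemma card_chambers : (@res_chambers R n #= [set k : nat | (k < #|sign_patterns|)%N])%card.
Proof.
have pattern_in x : A x -> sign_pattern x \in sign_patterns.
  by move=> Ax; apply/sign_patternsP; exists x.
apply/card_set_bijP; exists chamber_index; split.
- move=> _ [x Ax <-] /=; rewrite /chamber_index chamber_patternE // cardE index_mem mem_enum.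
  exact: pattern_in.
- move=> _ _ /set_mem [x Ax <-] /set_mem [y Ay <-].
  rewrite /chamber_index !chamber_patternE // => same_index.
  apply: same_connected_component; apply: same_pattern_component => //.
  have in_enum z : A z -> sign_pattern z \in enum sign_patterns by rewrite mem_enum => /pattern_in.
  by rewrite -(nth_index finset.set0 (in_enum x Ax)) same_index nth_index // in_enum.
- move=> k /= k_lt.
  have : nth finset.set0 (enum sign_patterns) k \in sign_patterns.
    by rewrite -mem_enum mem_nth // -cardE.
  case/sign_patternsP => x [Ax px]; exists (connected_component A x); first by exists x.
  by rewrite /chamber_index chamber_patternE // px index_uniq ?enum_uniq // -cardE.
Qed.

End Chambers.

Lemma log2_lt_of_lt_pow2 (R : realType) (N m : nat) : (0 < N)%N -> (N < 2 ^ m)%N ->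
  ln (N%:R : R) / ln 2 < m%:R.
Proof.
move=> N_gt0 N_lt; have ln2_gt0 : (0 : R) < ln 2 by apply: ln_gt0; rewrite ltr1n.
rewrite ltr_pdivrMr // mulr_natl -lnXn ?ltr0n //.
by rewrite ltr_ln ?posrE ?ltr0n ?exprn_gt0 ?ltr0n // -natrX ltr_nat.
Qed.

Theorem mainTheorem3 :
  (forall i n : nat, (1 <= i)%N -> (1 <= n)%N ->
     ((res_betti n i)%:R < (2 ^ (i * n))%:R / (i`!)%:R :> rat)%R) /\
  (forall (R : realType) (n : nat), (1 < n)%N ->
     exists Rn : nat,
       (@res_chambers R n #= [set k : nat | (k < Rn)%N])%card /\
       (ln (Rn%:R : R) / ln 2 < (n ^ 2 - n + 1)%:R)%R).
Proof.
split=> [i n i_gt0 _|R n n_gt1]; first exact: res_betti_lt.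
exists #|sign_patterns R n|; split; first exact: card_chambers.
exact: log2_lt_of_lt_pow2 (card_sign_patterns_gt0 R n) (card_sign_patterns_lt R n_gt1).
Qed.
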